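(* Let $\vec X\in\underline V^h$ with $|\vec X_\rho|>0$ a.e. on $I$, and let $\kappa\in V^h$ be such that $$\big(\kappa\,\vec\nu,\vec\eta\,|\vec X_\rho|\big)^h+\big(\vec X_\rho,\vec\eta_\rho|\vec X_\rho|^{-1}\big)=-\sum_{i=1}^2\sum_{p\in\partial_iI}\widehat\varrho^{(p)}\,\vec\eta(p)\cdot\vec e_{3-i}\qquad\forall\,\vec\eta\in\underline V^h_\partial .$$ Let $\vec h_j=\vec X(q_j)-\vec X(q_{j-1})$ for $j=1,\dots,J$, and $\vec h_0=\vec h_J$ if $\partial I=\emptyset$. Then $|\vec h_j|=|\vec h_{j-1}|$ whenever $\vec h_j$ and $\vec h_{j-1}$ are not parallel, for $j=1,\dots,J$ if $\partial I=\emptyset$ and for $j=2,\dots,J$ if $\partial I\neq\emptyset$.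
   Context: Setup. $\vec e_1=(1,0)^T$, $\vec e_2=(0,1)^T$; ''$\cdot$'' is the Euclidean inner product. $I$ is either the periodic interval $\mathbb R/\mathbb Z$ (with $\partial I=\emptyset$) or $I=(0,1)$ (with $\partial I=\{0,1\}$). $\partial I=\partial_DI\cup\partial_0I\cup\partial_1I\cup\partial_2I$ is a given disjoint partition, and $\widehat\varrho^{(p)}\in\mathbb R$, $p\in\{0,1\}$, are given constants. Let $J\ge3$, $h=1/J$, $q_j=jh$ ($j=0,\dots,J$; $q_0=q_J$ identified in the periodic case). $V^h$ is the space of continuous functions on $\overline I$ (periodic if $I=\mathbb R/\mathbb Z$) that are affine on each $[q_{j-1},q_j]$; $\underline V^h=[V^h]^2$; $\underline V^h_\partial=\{\vec\eta\in\underline V^h:\vec\eta(\rho)\cdot\vec e_1=0\ \forall\rho\in\partial_0I;\ \vec\eta(\rho)\cdot\vec e_i=0\ \forall\rho\in\partial_iI,\ i=1,2;\ \vec\eta(\rho)=\vec0\ \forall\rho\in\partial_DI\}$. $(\cdot,\cdot)$ is the $L^2(I)$ inner product, and for piecewise continuous $f,g$ the mass-lumped product is $(f,g)^h=\tfrac h2\sum_{j=1}^J[(fg)(q_j^-)+(fg)(q_{j-1}^+)]$. $\vec\nu=-[\vec X_\rho]^\perp/|\vec X_\rho|$ (piecewise constant), where $(a,b)^\perp=(b,-a)$. *)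

From Stdlib Require Import Reals.
Open Scope R_scope.

Definition vec := (R * R)%type.
Definition vadd (a b : vec) : vec := (fst a + fst b, snd a + snd b).
Definition vsub (a b : vec) : vec := (fst a - fst b, snd a - snd b).
Definition vscale (c : R) (a : vec) : vec := (c * fst a, c * snd a).
Definition dot (a b : vec) : R := fst a * fst b + snd a * snd b.
Definition vnorm (a : vec) : R := sqrt (dot a a).
Definition perp (a : vec) : vec := (snd a, - fst a).
Definition e1 : vec := (1, 0).
Definition e2 : vec := (0, 1).

Definition parallel (a b : vec) : Prop :=
  exists s t : R, (s <> 0 \/ t <> 0) /\ vadd (vscale s a) (vscale t b) = (0, 0).

(** Boundary partition: each endpoint of (0,1) lies in exactly one of
    d_D I, d_0 I, d_1 I, d_2 I. *)
Inductive bctype := BD | B0 | B1 | B2.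

(** The domain I: periodic R/Z (empty boundary) or (0,1) with the kind of
    boundary condition at rho = 0 and at rho = 1. *)
Inductive domain := Periodic | Open (c0 c1 : bctype).

(** Mesh size h = 1/J; nodes q_j = j h, j = 0..J. *)
Definition meshsize (J : nat) : R := / INR J.

Fixpoint sum1 (n : nat) (f : nat -> R) : R :=
  match n with O => 0 | S m => sum1 m f + f (S m) end.

(** Elements of V^h (resp. [V^h]^2) are identified with their nodal values
    f(q_0), ..., f(q_J) (a continuous piecewise affine function is uniquely
    determined by them, and any nodal values define one); in the periodic case
    q_0 = q_J are identified, i.e. f J = f 0. *)
Definition in_Vh {A : Type} (d : domain) (J : nat) (f : nat -> A) : Prop :=
  match d with Periodic => f J = f O | Open _ _ => True end.

Definition bc_ok (c : bctype) (v : vec) : Prop :=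
  match c with
  | BD => v = (0, 0)
  | B0 => dot v e1 = 0
  | B1 => dot v e1 = 0
  | B2 => dot v e2 = 0
  end.

Definition in_Vh_partial (d : domain) (J : nat) (eta : nat -> vec) : Prop :=
  in_Vh d J eta /\
  match d with
  | Periodic => True
  | Open c0 c1 => bc_ok c0 (eta O) /\ bc_ok c1 (eta J)
  end.

(** The derivative w.r.t. rho of a piecewise affine vector function on the
    element [q_{j-1}, q_j] (j >= 1): (f(q_j) - f(q_{j-1}))/h. *)
Definition drho (J : nat) (f : nat -> vec) (j : nat) : vec :=
  vscale (/ meshsize J) (vsub (f j) (f (j - 1)%nat)).

Definition nu (J : nat) (X : nat -> vec) (j : nat) : vec :=
  vscale (- / vnorm (drho J X j)) (perp (drho J X j)).

(** Mass-lumped product (f,g)^h = h/2 sum_{j=1}^J [(fg)(q_j^-) + (fg)(q_{j-1}^+)],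
    given the one-sided values L j = (fg)(q_j^-) and Rt j = (fg)(q_{j-1}^+). *)
Definition mass_lumped (J : nat) (L Rt : nat -> R) : R :=
  meshsize J / 2 * sum1 J (fun j => L j + Rt j).

(** L^2(I) integral of a function that is constant (= F j) on each element
    [q_{j-1}, q_j]. *)
Definition l2_pc (J : nat) (F : nat -> R) : R :=
  sum1 J (fun j => meshsize J * F j).

Definition lumped_term (J : nat) (X : nat -> vec) (kappa : nat -> R)
    (eta : nat -> vec) : R :=
  mass_lumped J
    (fun j => kappa j * dot (nu J X j) (eta j) * vnorm (drho J X j))
    (fun j => kappa (j - 1)%nat * dot (nu J X j) (eta (j - 1)%nat)
                * vnorm (drho J X j)).

Definition stiff_term (J : nat) (X : nat -> vec) (eta : nat -> vec) : R :=
  l2_pc J (fun j => dot (drho J X j) (vscale (/ vnorm (drho J X j)) (drho J eta j))).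

(** Contribution of an endpoint p to  sum_{i=1}^2 sum_{p in d_i I} rho^(p) eta(p).e_{3-i} *)
Definition bterm (c : bctype) (r : R) (v : vec) : R :=
  match c with
  | B1 => r * dot v e2
  | B2 => r * dot v e1
  | _ => 0
  end.

Definition bsum (d : domain) (J : nat) (rho0 rho1 : R) (eta : nat -> vec) : R :=
  match d with
  | Periodic => 0
  | Open c0 c1 => bterm c0 rho0 (eta O) + bterm c1 rho1 (eta J)
  end.

(** h_j = X(q_j) - X(q_{j-1}) for j >= 1; h_0 := h_J (only used when the
    boundary is empty). *)
Definition hvec (J : nat) (X : nat -> vec) (j : nat) : vec :=
  match j with
  | O => vsub (X J) (X (J - 1)%nat)
  | S k => vsub (X (S k)) (X k)
  end.

(** First index j for which the conclusion is claimed. *)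
Definition jstart (d : domain) : nat :=
  match d with Periodic => 1%nat | Open _ _ => 2%nat end.

(* Test the discrete equation with the vector-valued hat function at the node q shared by two
   neighbouring elements a and b, with nodal value w = r_a + r_b, where r_i is the (constant)
   tangent X_rho on element i.  Since perp is skew, (perp r_a + perp r_b) . (r_a + r_b) = 0, so
   the curvature term vanishes.  The stiffness term becomes
   (r_a/|r_a| - r_b/|r_b|) . (r_a + r_b) = (|r_a| - |r_b|) (1 - r_a.r_b / (|r_a| |r_b|)),
   and the second factor is positive by the strict Cauchy-Schwarz inequality when r_a and r_b
   are not parallel; hence |r_a| = |r_b|, i.e. |h_a| = |h_b|. *)

From Stdlib Require Import Reals Lra Lia Psatz.
Open Scope R_scope.

Definition cross (u v : vec) : R := fst u * snd v - snd u * fst v.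

Lemma dot_0r (u : vec) : dot u (0, 0) = 0.
Proof. unfold dot; simpl; ring. Qed.

Lemma dot_perp_add_self (u v : vec) :
  dot (perp u) (vadd u v) + dot (perp v) (vadd u v) = 0.
Proof. unfold dot, perp, vadd; simpl; ring. Qed.

Lemma vnorm_sqr (u : vec) : vnorm u * vnorm u = dot u u.
Proof. apply sqrt_sqrt; unfold dot; nra. Qed.

Lemma vnorm_ge0 (u : vec) : 0 <= vnorm u.
Proof. apply sqrt_pos. Qed.

Lemma vnorm_scale (c : R) (u : vec) : 0 <= c -> vnorm (vscale c u) = c * vnorm u.
Proof.
  intros Hc; destruct u as [x y]; unfold vnorm, dot, vscale; simpl.
  replace (c * x * (c * x) + c * y * (c * y)) with (c * c * (x * x + y * y)) by ring.
  rewrite sqrt_mult_alt by nra; rewrite sqrt_square by lra; reflexivity.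
Qed.

Lemma cross_neq0_of_not_parallel (u v : vec) : ~ parallel u v -> cross u v <> 0.
Proof.
  intros Hnp Hc; apply Hnp; destruct u as [a1 a2], v as [b1 b2].
  unfold cross in Hc; simpl in Hc; unfold parallel, vadd, vscale; simpl.
  destruct (Req_dec a1 0) as [H1|H1]; [destruct (Req_dec a2 0) as [H2|H2]|].
  - exists 1, 0; split; [left; lra|]; subst; f_equal; ring.
  - exists b2, (- a2); split; [right; lra|]; f_equal; nra.
  - exists b1, (- a1); split; [right; lra|]; f_equal; nra.
Qed.

Lemma parallel_sym (u v : vec) : parallel u v -> parallel v u.
Proof.
  intros [s [t [Hst E]]]; exists t, s; split; [tauto|].
  destruct u, v; unfold vadd, vscale in *; simpl in *; injection E as E1 E2; f_equal; lra.
Qed.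

Lemma not_parallel_scale (c : R) (u v : vec) :
  c <> 0 -> ~ parallel u v -> ~ parallel (vscale c u) (vscale c v).
Proof.
  intros Hc Hnp [s [t [Hst E]]]; apply Hnp; exists (s * c), (t * c); split.
  - destruct Hst; [left|right]; apply Rmult_integral_contrapositive; auto.
  - destruct u, v; unfold vadd, vscale in *; simpl in *; injection E as E1 E2.
    f_equal; lra.
Qed.

(* Lagrange's identity |u|^2 |v|^2 - (u.v)^2 = cross(u,v)^2 gives the strict inequality. *)
Lemma dot_lt_vnorm_mul (u v : vec) : ~ parallel u v -> dot u v < vnorm u * vnorm v.
Proof.
  intros Hnp; pose proof (cross_neq0_of_not_parallel u v Hnp) as Hc.
  assert (Lagrange : (vnorm u * vnorm v) * (vnorm u * vnorm v) - dot u v * dot u v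
                     = cross u v * cross u v).
  { replace ((vnorm u * vnorm v) * (vnorm u * vnorm v))
      with ((vnorm u * vnorm u) * (vnorm v * vnorm v)) by ring.
    rewrite !vnorm_sqr; destruct u, v; unfold dot, cross; simpl; ring. }
  assert (0 < cross u v * cross u v) by (apply Rsqr_pos_lt in Hc; exact Hc).
  pose proof (Rmult_le_pos _ _ (vnorm_ge0 u) (vnorm_ge0 v)); nra.
Qed.

Lemma unit_tangent_balance (u v : vec) : 0 < vnorm u -> 0 < vnorm v ->
  (dot u (vadd u v) / vnorm u - dot v (vadd u v) / vnorm v) * (vnorm u * vnorm v)
  = (vnorm u - vnorm v) * (vnorm u * vnorm v - dot u v).
Proof.
  intros Hu Hv.
  assert (Eu : dot u (vadd u v) = vnorm u * vnorm u + dot u v).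
  { rewrite vnorm_sqr; destruct u, v; unfold dot, vadd; simpl; ring. }
  assert (Ev : dot v (vadd u v) = vnorm v * vnorm v + dot u v).
  { rewrite vnorm_sqr; destruct u, v; unfold dot, vadd; simpl; ring. }
  rewrite Eu, Ev; field; lra.
Qed.

Lemma vnorm_eq_of_unit_tangent_balance (u v : vec) :
  0 < vnorm u -> 0 < vnorm v -> ~ parallel u v ->
  dot u (vadd u v) / vnorm u - dot v (vadd u v) / vnorm v = 0 ->
  vnorm u = vnorm v.
Proof.
  intros Hu Hv Hnp E.
  pose proof (unit_tangent_balance u v Hu Hv) as F; rewrite E, Rmult_0_l in F.
  pose proof (dot_lt_vnorm_mul u v Hnp).
  symmetry in F; apply Rmult_integral in F; destruct F; lra.
Qed.

Lemma sum1_eq0 (n : nat) (f : nat -> R) :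
  (forall j, (1 <= j <= n)%nat -> f j = 0) -> sum1 n f = 0.
Proof.
  induction n as [|n IH]; simpl; intros H; [reflexivity|].
  rewrite IH by (intros; apply H; lia); rewrite H by lia; ring.
Qed.

Lemma sum1_single (n : nat) (f : nat -> R) (a : nat) : (1 <= a <= n)%nat ->
  (forall j, (1 <= j <= n)%nat -> j <> a -> f j = 0) -> sum1 n f = f a.
Proof.
  induction n as [|n IH]; simpl; intros Ha H; [lia|].
  destruct (Nat.eq_dec a (S n)) as [->|Hne].
  - rewrite sum1_eq0 by (intros; apply H; lia); ring.
  - rewrite IH by (try lia; intros; apply H; lia); rewrite (H (S n)) by lia; ring.
Qed.

Lemma sum1_pair (n : nat) (f : nat -> R) (a b : nat) :
  (1 <= a <= n)%nat -> (1 <= b <= n)%nat -> a <> b ->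
  (forall j, (1 <= j <= n)%nat -> j <> a -> j <> b -> f j = 0) -> sum1 n f = f a + f b.
Proof.
  induction n as [|n IH]; simpl; intros Ha Hb Hab H; [lia|].
  destruct (Nat.eq_dec a (S n)) as [->|Hna]; [|destruct (Nat.eq_dec b (S n)) as [->|Hnb]].
  - rewrite (sum1_single n f b) by (try lia; intros; apply H; lia); ring.
  - rewrite (sum1_single n f a) by (try lia; intros; apply H; lia); ring.
  - rewrite IH by (try lia; intros; apply H; lia); rewrite (H (S n)) by lia; ring.
Qed.

(* Element [j] is [q_(j-1), q_j]; [eta] may be nonzero only at the right end of element [a]
   and at the left end of element [b], i.e. at the node they share. *)
Section NodeTest.

Variables (J : nat) (X eta : nat -> vec) (kappa : nat -> R) (a b : nat).
Hypotheses (Ha : (1 <= a <= J)%nat) (Hb : (1 <= b <= J)%nat) (Hab : a <> b).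
Hypothesis eta_right : forall j, (1 <= j <= J)%nat -> j <> a -> eta j = (0, 0).
Hypothesis eta_left : forall j, (1 <= j <= J)%nat -> j <> b -> eta (j - 1)%nat = (0, 0).

Lemma lumped_term_node :
  0 < vnorm (drho J X a) -> 0 < vnorm (drho J X b) ->
  lumped_term J X kappa eta
  = - (meshsize J / 2) * (kappa a * dot (perp (drho J X a)) (eta a)
                          + kappa (b - 1)%nat * dot (perp (drho J X b)) (eta (b - 1)%nat)).
Proof.
  intros Hra Hrb; unfold lumped_term, mass_lumped.
  rewrite (sum1_pair J _ a b) by (try assumption; intros j Hj Hja Hjb;
    rewrite (eta_right j), (eta_left j), !dot_0r by assumption; ring).
  rewrite (eta_left a), (eta_right b), !dot_0r by (auto; lia).
  unfold nu; revert Hra Hrb; generalize (drho J X a) (drho J X b); intros ra rb Hra Hrb.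
  unfold dot, vscale; simpl; field; lra.
Qed.

Lemma stiff_term_node :
  meshsize J <> 0 -> 0 < vnorm (drho J X a) -> 0 < vnorm (drho J X b) ->
  stiff_term J X eta
  = dot (drho J X a) (eta a) / vnorm (drho J X a)
    - dot (drho J X b) (eta (b - 1)%nat) / vnorm (drho J X b).
Proof.
  intros Hh Hra Hrb; unfold stiff_term, l2_pc.
  rewrite (sum1_pair J _ a b) by (try assumption; intros j Hj Hja Hjb;
    unfold drho; rewrite (eta_right j), (eta_left j) by assumption;
    unfold dot, vscale, vsub; simpl; ring).
  assert (Ea : drho J eta a = vscale (/ meshsize J) (eta a)).
  { unfold drho; rewrite (eta_left a) by (auto; lia).
    destruct (eta a); unfold vscale, vsub; simpl; f_equal; ring. }
  assert (Eb : drho J eta b = vscale (- / meshsize J) (eta (b - 1)%nat)).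
  { unfold drho; rewrite (eta_right b) by (auto; lia).
    destruct (eta (b - 1)%nat); unfold vscale, vsub; simpl; f_equal; ring. }
  rewrite Ea, Eb; revert Hra Hrb; generalize (drho J X a) (drho J X b).
  intros ra rb Hra Hrb; unfold dot, vscale; simpl; field; lra.
Qed.

End NodeTest.

Lemma in_Vh_partial_of_zero_ends (d : domain) (J : nat) (eta : nat -> vec) :
  eta O = (0, 0) -> eta J = (0, 0) -> in_Vh_partial d J eta.
Proof.
  intros E0 EJ; destruct d as [|c0 c1]; split; simpl; rewrite ?E0, ?EJ; auto.
  split; destruct c0 + destruct c1; simpl; unfold dot; simpl; auto; ring.
Qed.

Lemma bsum_zero_ends (d : domain) (J : nat) (rho0 rho1 : R) (eta : nat -> vec) :
  eta O = (0, 0) -> eta J = (0, 0) -> bsum d J rho0 rho1 eta = 0.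
Proof.
  intros E0 EJ; destruct d as [|c0 c1]; simpl; [reflexivity|].
  rewrite E0, EJ; destruct c0, c1; unfold bterm, dot; simpl; ring.
Qed.

(* The hat function with nodal value [w] at the node joining element [a] to element [b]; in the
   periodic case the node q_0 = q_J carries the two indices [J] and [0]. *)
Definition node_hat (a b : nat) (w : vec) (n : nat) : vec :=
  if ((n =? a) || (n =? b - 1))%bool then w else (0, 0).

Section NodeHat.

Variables (J a b : nat) (w : vec).
Hypotheses (Ha : (1 <= a <= J)%nat) (Hb : (1 <= b <= J)%nat).
Hypothesis adjacent : (a + 1 = b)%nat \/ (a = J /\ b = 1%nat).

Lemma node_hat_off (n : nat) : n <> a -> n <> (b - 1)%nat -> node_hat a b w n = (0, 0).
Proof.
  intros Hna Hnb; unfold node_hat.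
  rewrite (proj2 (Nat.eqb_neq n a) Hna), (proj2 (Nat.eqb_neq n (b - 1)) Hnb); reflexivity.
Qed.

Lemma node_hat_right : node_hat a b w a = w.
Proof. unfold node_hat; rewrite Nat.eqb_refl; reflexivity. Qed.

Lemma node_hat_left : node_hat a b w (b - 1)%nat = w.
Proof. unfold node_hat; rewrite Nat.eqb_refl, Bool.orb_true_r; reflexivity. Qed.

Lemma node_hat_right_support (j : nat) :
  (1 <= j <= J)%nat -> j <> a -> node_hat a b w j = (0, 0).
Proof. intros; apply node_hat_off; lia. Qed.

Lemma node_hat_left_support (j : nat) :
  (1 <= j <= J)%nat -> j <> b -> node_hat a b w (j - 1)%nat = (0, 0).
Proof. intros; apply node_hat_off; lia. Qed.

End NodeHat.

Lemma drho_hvec (J : nat) (X : nat -> vec) (i : nat) :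
  (1 <= i)%nat -> drho J X i = vscale (/ meshsize J) (hvec J X i).
Proof.
  intros Hi; destruct i as [|k]; [lia|]; unfold drho, hvec.
  replace (S k - 1)%nat with k by lia; reflexivity.
Qed.

Lemma hvec_0 (J : nat) (X : nat -> vec) : (1 <= J)%nat -> hvec J X O = hvec J X J.
Proof.
  intros HJ; destruct J as [|m]; [lia|]; unfold hvec.
  replace (S m - 1)%nat with m by lia; reflexivity.
Qed.

Lemma vnorm_hvec_eq_of_node_test (J : nat) (X : nat -> vec) (kappa : nat -> R) (a b : nat) :
  (1 <= a <= J)%nat -> (1 <= b <= J)%nat -> a <> b ->
  (a + 1 = b)%nat \/ (a = J /\ b = 1%nat) ->
  0 < meshsize J -> 0 < vnorm (drho J X a) -> 0 < vnorm (drho J X b) ->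
  kappa a = kappa (b - 1)%nat ->
  lumped_term J X kappa (node_hat a b (vadd (drho J X a) (drho J X b)))
  + stiff_term J X (node_hat a b (vadd (drho J X a) (drho J X b))) = 0 ->
  ~ parallel (hvec J X b) (hvec J X a) ->
  vnorm (hvec J X b) = vnorm (hvec J X a).
Proof.
  intros Ha Hb Hab Hadj Hh Hra Hrb Hk E Hnp.
  set (w := vadd (drho J X a) (drho J X b)) in E.
  pose proof (node_hat_right_support J a b w Ha Hb Hadj) as Sr.
  pose proof (node_hat_left_support J a b w Ha Hb Hadj) as Sl.
  assert (curvature_vanishes : lumped_term J X kappa (node_hat a b w) = 0).
  { rewrite (lumped_term_node J X _ kappa a b) by assumption.
    rewrite node_hat_right, node_hat_left, Hk; unfold w.
    rewrite <- (Rmult_0_r (- (meshsize J / 2) * kappa (b - 1)%nat)),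
      <- (dot_perp_add_self (drho J X a) (drho J X b)).
    ring. }
  rewrite curvature_vanishes, Rplus_0_l, (stiff_term_node J X _ a b) in E by (auto; lra).
  rewrite node_hat_right, node_hat_left in E.
  assert (Hr : vnorm (drho J X a) = vnorm (drho J X b)).
  { apply vnorm_eq_of_unit_tangent_balance; try assumption.
    rewrite !(drho_hvec J X) by lia.
    intros Hp; apply parallel_sym in Hp; revert Hp.
    apply not_parallel_scale; [apply Rinv_neq_0_compat; lra | exact Hnp]. }
  rewrite !(drho_hvec J X), !vnorm_scale in Hr by (lia || (left; apply Rinv_0_lt_compat; lra)).
  apply Rmult_eq_reg_l in Hr; [lra | apply Rinv_neq_0_compat; lra].
Qed.

Theorem mainTheorem8 (d : domain) (rho0 rho1 : R) (J : nat) (HJ : (3 <= J)%nat)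
  (X : nat -> vec) (kappa : nat -> R)
  (HX : in_Vh d J X) (Hk : in_Vh d J kappa)
  (Hpos : forall j : nat, (1 <= j <= J)%nat -> vnorm (drho J X j) > 0)
  (Heq : forall eta : nat -> vec, in_Vh_partial d J eta ->
     lumped_term J X kappa eta + stiff_term J X eta = - bsum d J rho0 rho1 eta) :
  forall j : nat, (jstart d <= j <= J)%nat ->
    ~ parallel (hvec J X j) (hvec J X (j - 1)%nat) ->
    vnorm (hvec J X j) = vnorm (hvec J X (j - 1)%nat).
Proof.
  intros j Hj Hnp.
  assert (Hh : 0 < meshsize J) by (apply Rinv_0_lt_compat, lt_0_INR; lia).
  destruct (Nat.eq_dec j 1) as [->|Hj1].
  - assert (d = Periodic) as -> by (destruct d; simpl in Hj; [reflexivity | lia]).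
    simpl in Hk; change (1 - 1)%nat with O in Hnp |- *; rewrite hvec_0 in Hnp |- * by lia.
    apply (vnorm_hvec_eq_of_node_test J X kappa J 1); try apply Hpos; auto; try lia.
    rewrite Heq; [simpl; ring|].
    split; [|exact I]; simpl; rewrite (node_hat_right J), (node_hat_left J 1); reflexivity.
  - assert (Hj2 : (2 <= j)%nat) by (destruct d; simpl in Hj; lia).
    apply (vnorm_hvec_eq_of_node_test J X kappa (j - 1) j); try apply Hpos; auto; try lia.
    assert (E0 : forall w, node_hat (j - 1) j w O = (0, 0)) by (intros; apply node_hat_off; lia).
    assert (EJ : forall w, node_hat (j - 1) j w J = (0, 0)) by (intros; apply node_hat_off; lia).
    rewrite Heq by (apply in_Vh_partial_of_zero_ends; auto).
    rewrite bsum_zero_ends by auto; ring.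
Qed.
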